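(* Let $\mathbf b\in\mathrm{Comp}_{p,n}$ and $\boldsymbol\lambda\in\mathcal P_{d,\mathbf b}$, let $o_{\boldsymbol\lambda}=\min\{k\ge1:\boldsymbol\lambda^{[k+t]}=\boldsymbol\lambda^{[t]}\ \forall t\}$, $p_{\boldsymbol\lambda}=p/o_{\boldsymbol\lambda}$, $n_{\boldsymbol\lambda}=n/p_{\boldsymbol\lambda}$, and $\sqrt{\boldsymbol\lambda}=(\boldsymbol\lambda^{[1]},\dots,\boldsymbol\lambda^{[o_{\boldsymbol\lambda}]})$ (the first $do_{\boldsymbol\lambda}$ components of $\boldsymbol\lambda$). Then the numbers $\gamma_{\mathbf b}(\sqrt{\boldsymbol\lambda})=\big(\ell(w_{\mathbf b})+\sum_{a=1}^p\beta(\overrightarrow{\boldsymbol\lambda^{[a]}})-\beta(\overrightarrow{\boldsymbol\lambda})\big)/p_{\boldsymbol\lambda}$ and $\alpha(\boldsymbol\lambda)=\frac12 n_{\boldsymbol\lambda}(rp-do_{\boldsymbol\lambda})-d\alpha(\mathbf b)/p_{\boldsymbol\lambda}$ are integers, and setting $$g_{\boldsymbol\lambda}=\dot\varepsilon^{\alpha(\boldsymbol\lambda)}\dot q^{\gamma_{\mathbf b}(\sqrt{\boldsymbol\lambda})}(\dot Q_1\cdots\dot Q_d)^{n_{\boldsymbol\lambda}(p-1)}\prod_{(i,j,s)\in[\sqrt{\boldsymbol\lambda}]}\ \prod_{1\le t\le do_{\boldsymbol\lambda}}\ \prod_{\substack{0\le a<p_{\boldsymbol\lambda}\\ a\ne0\text{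 if }p_t=p_s}}\big(\dot\varepsilon^{ao_{\boldsymbol\lambda}}h^{\boldsymbol\lambda}_{ij}(s,t)-1\big)$$ one has $g_{\boldsymbol\lambda}\in\mathbb Z[\dot\varepsilon,\dot q^{\pm1},\dot Q_1^{\pm1},\dots,\dot Q_d^{\pm1}]$ and $$f_{\boldsymbol\lambda}=\dot\varepsilon^{\frac12 do_{\boldsymbol\lambda}n(1-p_{\boldsymbol\lambda})}\,g_{\boldsymbol\lambda}^{\,p_{\boldsymbol\lambda}}.$$
   Context: Setting: $p>1$, $d\ge1$, $n\ge3$, $r=pd$; $\mathcal F=\mathbb Q(\dot\varepsilon,\dot q,\dot Q_1,\dots,\dot Q_d)$, $\dot\varepsilon\in\mathbb C$ a primitive $p$th root of unity, $\dot q,\dot Q_i$ indeterminates. $\mathbf b=(b_1,\dots,b_p)$ is a composition of $n$ into $p$ nonnegative parts, $\alpha(\mathbf b)=\sum_iib_i$, $\ell(w_{\mathbf b})=\sum_{i<j}b_ib_j$. For an $r$-multipartition $\boldsymbol\lambda=(\lambda^{(1)},\dots,\lambda^{(r)})$, $\boldsymbol\lambda^{[t]}=(\lambda^{(dt-d+1)},\dots,\lambda^{(dt)})$ with $\boldsymbol\lambda^{[t+kp]}=\boldsymbol\lambda^{[t]}$; $\mathcal P_{d,\mathbf b}$ is the set of $\boldsymbol\lambda$ with $|\boldsymbol\lambda^{[t]}|=b_t$. $f_{\boldsymbol\lambda}$ is the explicit element $f_{\boldsymbol\lambda}=\dot\varepsilon^{\frac12 rn(p-1)-d\alpha(\mathbf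 b)}\dot q^{\ell(w_{\mathbf b})-\beta(\overrightarrow{\boldsymbol\lambda})+\sum_a\beta(\overrightarrow{\boldsymbol\lambda^{[a]}})}(\dot Q_1\cdots\dot Q_d)^{n(p-1)}\prod_{(i,j,s)\in[\boldsymbol\lambda]}\prod_{1\le t\le r,\,p_t\ne p_s}(h^{\boldsymbol\lambda}_{ij}(s,t)-1)$, which is the scalar by which the central element $z_{\mathbf b}$ of $\mathcal H_{d,\mathbf b}$ acts on the Specht module $S_{\mathbf b}(\boldsymbol\lambda)$. Notation: $\beta(\lambda)=\sum_i(i-1)\lambda_i$ for a partition; $\overrightarrow{\boldsymbol\mu}$ is the partition formed by all parts of all components of $\boldsymbol\mu$ sorted decreasingly; $[\boldsymbol\mu]=\{(i,j,s):1\le j\le\mu^{(s)}_i\}$; $h_{ij}(\lambda,\mu)=\lambda_i-i+\mu'_j-j+1$; each $1\le s\le r$ is written $s=d(p_s-1)+d_s$ with $1\le p_s\le p$, $1\le d_s\le d$; $h^{\boldsymbol\lambda}_{ij}(s,t)=\dot\varepsilon^{p_s-p_t}\dot q^{h_{ij}(\lambda^{(s)},\lambda^{(t)})}\dot Q_{d_s}\dot Q_{d_t}^{-1}$. *)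

From HB Require Import structures.
From mathcomp Require Import all_boot all_order all_algebra.
Set Implicit Arguments. Unset Strict Implicit. Unset Printing Implicit Defensive.
Import Order.TTheory GRing.Theory Num.Theory.
Local Open Scope ring_scope.

Definition is_partition (mu : seq nat) : bool :=
  sorted (fun x y => (y <= x)%N) mu && all (fun x => (0 < x)%N) mu.

Definition part (mu : seq nat) (i : nat) : nat := nth 0%N mu i.-1.

Definition conjpart (mu : seq nat) (j : nat) : nat := count (fun x => (j <= x)%N) mu.

Definition beta (mu : seq nat) : nat := \sum_(i < size mu) (i * nth 0%N mu i)%N.

Definition comp (lam : seq (seq nat)) (s : nat) : seq nat := nth [::] lam s.-1.

(* lambda^{[t]} (t >= 1), with lambda^{[t+kp]} = lambda^{[t]} *)
Definition block (p d : nat) (lam : seq (seq nat)) (t : nat) : seq (seq nat) :=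
  take d (drop (d * (t.-1 %% p)) lam).

Definition arrow (mu : seq (seq nat)) : seq nat := sort (fun x y => (y <= x)%N) (flatten mu).

Definition msize (mu : seq (seq nat)) : nat := sumn (map sumn mu).

Definition bpart (b : seq nat) (i : nat) : nat := nth 0%N b i.-1.

Definition is_comp (p n : nat) (b : seq nat) : bool := (size b == p) && (sumn b == n).

Definition in_Pdb (p d : nat) (b : seq nat) (lam : seq (seq nat)) : bool :=
  [&& size lam == (p * d)%N, all is_partition lam &
      all (fun t => msize (block p d lam t) == bpart b t) (iota 1 p)].

Definition alphab (p : nat) (b : seq nat) : nat := \sum_(1 <= i < p.+1) (i * bpart b i)%N.

Definition ellw (p : nat) (b : seq nat) : nat :=
  \sum_(1 <= i < p.+1) \sum_(i.+1 <= j < p.+1) (bpart b i * bpart b j)%N.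

(* o_lambda = min{k >= 1 : lambda^{[k+t]} = lambda^{[t]} for all t}.
   Since k = p always works and blocks are p-periodic in t, it suffices to
   search k in 1..p and check t in 1..p. *)
Definition olam (p d : nat) (lam : seq (seq nat)) : nat :=
  (find (fun k => all (fun t => block p d lam (k + t) == block p d lam t) (iota 1 p))
        (iota 1 p)).+1.

Definition plam (p d : nat) (lam : seq (seq nat)) : nat := (p %/ olam p d lam)%N.
Definition nlam (p d n : nat) (lam : seq (seq nat)) : nat := (n %/ plam p d lam)%N.

Definition sqrtlam (p d : nat) (lam : seq (seq nat)) : seq (seq nat) :=
  take (d * olam p d lam) lam.

Definition sumbeta (p d : nat) (lam : seq (seq nat)) : nat :=
  \sum_(1 <= a < p.+1) beta (arrow (block p d lam a)).

Definition gammab (p d : nat) (b : seq nat) (lam : seq (seq nat)) : rat :=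
  ((ellw p b)%:R + (sumbeta p d lam)%:R - (beta (arrow lam))%:R) / (plam p d lam)%:R.

Definition alphalam (p d n : nat) (b : seq nat) (lam : seq (seq nat)) : rat :=
  2%:R^-1 * (nlam p d n lam)%:R * ((p * d * p)%:R - (d * olam p d lam)%:R)
  - (d * alphab p b)%:R / (plam p d lam)%:R.

(* s = d(p_s - 1) + d_s with 1 <= p_s <= p, 1 <= d_s <= d *)
Definition ps (d s : nat) : nat := (s.-1 %/ d).+1.
Definition ds (d s : nat) : nat := (s.-1 %% d).+1.

Definition hook (la mu : seq nat) (i j : nat) : int :=
  (part la i)%:Z - i%:Z + (conjpart mu j)%:Z - j%:Z + 1.

Section Field.
Variable K : fieldType.

Definition hl (d : nat) (eps q : K) (Q : nat -> K) (lam : seq (seq nat)) (i j s t : nat) : K :=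
  eps ^ ((ps d s)%:Z - (ps d t)%:Z) * q ^ (hook (comp lam s) (comp lam t) i j)
  * Q (ds d s) * (Q (ds d t))^-1.

Definition cellprod (mu : seq (seq nat)) (F : nat -> nat -> nat -> K) : K :=
  \prod_(1 <= s < (size mu).+1)
    \prod_(1 <= i < (size (comp mu s)).+1)
      \prod_(1 <= j < (part (comp mu s) i).+1) F i j s.

Definition Qprod (d : nat) (Q : nat -> K) : K := \prod_(1 <= i < d.+1) Q i.

Definition flam (p d n : nat) (eps q : K) (Q : nat -> K) (b : seq nat)
    (lam : seq (seq nat)) : K :=
  let r := (p * d)%N in
  eps ^ (((r * n * (p - 1))./2)%:Z - (d * alphab p b)%:Z)
  * q ^ ((ellw p b)%:Z - (beta (arrow lam))%:Z + (sumbeta p d lam)%:Z)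
  * Qprod d Q ^+ (n * (p - 1))
  * cellprod lam (fun i j s =>
      \prod_(1 <= t < r.+1 | ps d t != ps d s) (hl d eps q Q lam i j s t - 1)).

(* g_lambda; the integer exponents alpha(lambda), gamma_b(sqrt lambda) are
   taken as the numerators of the rationals alphalam, gammab (which are
   asserted to be integers in the theorem) *)
Definition glam (p d n : nat) (eps q : K) (Q : nat -> K) (b : seq nat)
    (lam : seq (seq nat)) : K :=
  let o := olam p d lam in
  let pl := plam p d lam in
  eps ^ numq (alphalam p d n b lam) * q ^ numq (gammab p d b lam)
  * Qprod d Q ^+ (nlam p d n lam * (p - 1))
  * cellprod (sqrtlam p d lam) (fun i j s =>
      \prod_(1 <= t < (d * o).+1)
        \prod_(0 <= a < pl | (ps d t == ps d s) ==> (a != 0)%N)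
          (eps ^+ (a * o) * hl d eps q Q lam i j s t - 1)).

(* the subring Z[eps, q^{+-1}, Q_1^{+-1}, ..., Q_d^{+-1}] of K *)
Inductive inLaurent (d : nat) (eps q : K) (Q : nat -> K) : K -> Prop :=
  | inL_one : inLaurent d eps q Q 1
  | inL_eps : inLaurent d eps q Q eps
  | inL_q : inLaurent d eps q Q q
  | inL_qinv : inLaurent d eps q Q q^-1
  | inL_Q i : (1 <= i <= d)%N -> inLaurent d eps q Q (Q i)
  | inL_Qinv i : (1 <= i <= d)%N -> inLaurent d eps q Q (Q i)^-1
  | inL_opp x : inLaurent d eps q Q x -> inLaurent d eps q Q (- x)
  | inL_add x y : inLaurent d eps q Q x -> inLaurent d eps q Q y -> inLaurent d eps q Q (x + y)
  | inL_mul x y : inLaurent d eps q Q x -> inLaurent d eps q Q y -> inLaurent d eps q Q (x * y).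

End Field.

From Pilot Require Import Defs.
From HB Require Import structures.
From mathcomp Require Import all_boot all_order all_algebra zify ring.
Import Order.TTheory GRing.Theory Num.Theory.
Import Pilot.Defs. (* [ssrfun.comp] would otherwise shadow [Defs.comp] *)

(* Let o be the block period of lambda and p_lambda = p / o.  Then lambda is made
   of p_lambda copies of sqrt(lambda), the k-th copy sitting k*o block indices
   further, and b is o-periodic as well.  In f_lambda every cell of lambda is a
   translate of a cell of sqrt(lambda) with the same factor, which gives the power
   p_lambda.  For a fixed cell the p_lambda translates t + k' d o of a component
   t of sqrt(lambda) contribute root-of-unity factors eps^((k - k') o); as k'
   varies, a = (k - k') mod p_lambda runs over all residues, the one with a = 0
   being excluded exactly when the blocks of s and t coincide.  The remaining
   exponents of eps and q are bookkeeping: beta of an arrow of p_lambda copies,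
   alpha(b) and ell(w_b) computed block by block. *)

Section BlockPeriod.
Variables (p d : nat) (lam : seq (seq nat)).
Hypothesis p_gt0 : (0 < p)%N.

Definition block_period k :=
  all (fun t => block p d lam (k + t) == block p d lam t) (iota 1 p).

Local Notation o := (olam p d lam).

Lemma block_modp t t' : t.-1 = t'.-1 %[mod p] -> block p d lam t = block p d lam t'.
Proof. by rewrite /block => ->. Qed.

Lemma block_periodP k t : block_period k -> (0 < t)%N ->
  block p d lam (k + t) = block p d lam t.
Proof.
move=> /allP per t_gt0; set t' := (t.-1 %% p).+1.
have t'_in : t' \in iota 1 p by rewrite mem_iota add1n !ltnS ltn_pmod.
have -> : block p d lam t = block p d lam t' by apply: block_modp; rewrite modn_mod.
have -> : block p d lam (k + t) = block p d lam (k + t').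
  by apply: block_modp; rewrite -(prednK t_gt0) !addnS /= modnDmr.
exact/eqP/per.
Qed.

Lemma block_period_p : block_period p.
Proof.
apply/allP=> t; rewrite mem_iota => /andP[t_gt0 _]; apply/eqP/block_modp.
by rewrite -(prednK t_gt0) addnS /= modnDl.
Qed.

Lemma has_block_period : has block_period (iota 1 p).
Proof.
apply/hasP; exists p; last exact: block_period_p.
by rewrite mem_iota add1n ltnS p_gt0 leqnn.
Qed.

Lemma olam_le : (o <= p)%N.
Proof. by have := has_block_period; rewrite has_find size_iota. Qed.

Lemma olam_period : block_period o.
Proof.
have := nth_find 0 has_block_period.
by rewrite nth_iota ?add1n //; exact: olam_le.
Qed.

Lemma olam_min k : (0 < k < o)%N -> ~~ block_period k.
Proof.
case/andP=> k_gt0 k_lt; have := @before_find _ 0 block_period (iota 1 p) k.-1.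
rewrite nth_iota ?add1n ?prednK //; first by move=> /(_ k_lt) ->.
exact: leq_trans (ltnW k_lt) olam_le.
Qed.

Lemma block_mul_olam j t : (0 < t)%N -> block p d lam (j * o + t) = block p d lam t.
Proof.
move=> t_gt0; elim: j => [|j IH] //.
by rewrite mulSn -addnA block_periodP ?olam_period // addn_gt0 t_gt0 orbT.
Qed.

Lemma olam_dvd : (o %| p)%N.
Proof.
apply/negPn/negP=> ndvd; have r_gt0 : (0 < p %% o)%N by rewrite lt0n.
have /negP[] : ~~ block_period (p %% o) by apply: olam_min; rewrite r_gt0 ltn_pmod.
apply/allP=> t; rewrite mem_iota => /andP[t_gt0 _]; apply/eqP.
rewrite -(block_mul_olam (p %/ o)) ?addn_gt0 ?t_gt0 ?orbT //.
by rewrite addnA -divn_eq block_periodP // block_period_p.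
Qed.

End BlockPeriod.

Lemma bin2_double k : ('C(k, 2) * 2 + k = k * k)%N.
Proof. by elim: k => // k IH; rewrite binS bin1; lia. Qed.

Lemma beta_cons x s : beta (x :: s) = (beta s + sumn s)%N.
Proof.
rewrite /beta /= big_ord_recl /= mul0n add0n sumnE (big_nth 0) big_mkord -big_split.
by apply: eq_bigr => i _; rewrite /= mulSn addnC.
Qed.

Lemma beta_cat s1 s2 : beta (s1 ++ s2) = (beta s1 + beta s2 + size s1 * sumn s2)%N.
Proof.
elim: s1 => [|x s1 IH] /=; first by rewrite /beta big_ord0 add0n mul0n addn0.
by rewrite !beta_cons IH sumn_cat; lia.
Qed.

Lemma beta_nseq k x : beta (nseq k x) = ('C(k, 2) * x)%N.
Proof.
elim: k => [|k IH]; first by rewrite /beta big_ord0.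
by rewrite -[nseq _ _]cat1s beta_cons IH sumn_nseq binS bin1; lia.
Qed.

Section Replicate.
Variable k : nat.
Local Notation rep mu := (flatten (map (nseq k) mu)).

Lemma count_rep (P : pred nat) mu : count P (rep mu) = (k * count P mu)%N.
Proof. by elim: mu => [|x mu IH] //=; rewrite ?muln0 // count_cat IH count_nseq; lia. Qed.

Lemma sumn_rep mu : sumn (rep mu) = (k * sumn mu)%N.
Proof. by elim: mu => [|x mu IH] //=; rewrite ?muln0 // sumn_cat IH sumn_nseq; lia. Qed.

Lemma beta_rep mu : beta (rep mu) = (k * k * beta mu + 'C(k, 2) * sumn mu)%N.
Proof.
elim: mu => [|x mu IH] /=; first by rewrite /beta !big_ord0 !muln0.
rewrite beta_cat beta_nseq IH size_nseq sumn_rep beta_cons; lia.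
Qed.

Local Notation ge := (fun x y : nat => (y <= x)%N).

Lemma ge_trans : transitive ge.
Proof. by move=> x y z /= le_yx le_zy; apply: leq_trans le_yx. Qed.

Lemma sorted_rep mu : sorted ge mu -> sorted ge (rep mu).
Proof.
rewrite !(sorted_pairwise ge_trans); elim: mu => [|x mu IH] //= /andP[x_ge mu_ge].
rewrite pairwise_cat IH // andbT; apply/andP; split.
  apply/allrelP => y z; rewrite mem_nseq => /andP[_ /eqP ->].
  case/flattenP => w /mapP[u u_in ->]; rewrite mem_nseq => /andP[_ /eqP ->].
  exact: (allP x_ge).
elim: k => [|j IH'] //=; rewrite IH' andbT.
by apply/allP=> y; rewrite mem_nseq => /andP[_ /eqP ->].
Qed.

Lemma sort_rep (s1 s2 : seq nat) : (forall P : pred nat, count P s1 = (k * count P s2)%N) ->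
  sort ge s1 = rep (sort ge s2).
Proof.
have ge_total : total ge by move=> x y; rewrite orbC leq_total.
move=> count_s; apply: (sorted_eq ge_trans); rewrite ?sorted_rep ?sort_sorted //.
  by move=> x y /andP[le_yx le_xy]; apply/eqP; rewrite eqn_leq le_xy.
rewrite perm_sort; apply/permP => P.
by rewrite count_rep count_s (permP (_ : perm_eq (sort ge s2) s2)) // perm_sort.
Qed.

Lemma beta_sort_rep (s1 s2 : seq nat) : (forall P : pred nat, count P s1 = (k * count P s2)%N) ->
  beta (sort ge s1) = (k * k * beta (sort ge s2) + 'C(k, 2) * sumn s2)%N.
Proof.
by move/sort_rep->; rewrite beta_rep; congr (_ + _ * _)%N; apply/perm_sumn; rewrite perm_sort.
Qed.

End Replicate.

Lemma ps_shift d s k o : (0 < d)%N -> (0 < s)%N ->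
  ps d (s + k * (d * o)) = (ps d s + k * o)%N.
Proof.
move=> d_gt0 s_gt0; rewrite /ps.
have -> : ((s + k * (d * o)).-1 = k * o * d + s.-1)%N by lia.
by rewrite divnMDl // addnC.
Qed.

Lemma ds_shift d s k o : (0 < s)%N -> ds d (s + k * (d * o)) = ds d s.
Proof.
move=> s_gt0; rewrite /ds.
have -> : ((s + k * (d * o)).-1 = k * o * d + s.-1)%N by lia.
by rewrite modnMDl.
Qed.

Lemma ps_bound d o s : (0 < d)%N -> (0 < s <= d * o)%N -> (0 < ps d s <= o)%N.
Proof. by move=> d_gt0 /andP[s_gt0 s_le]; rewrite /ps ltn_divLR // mulnC prednK. Qed.

Lemma big_nat_blocks (R : Type) (idx : R) (op : Monoid.law idx) k m (F : nat -> R) :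
  \big[op/idx]_(1 <= s < (k * m).+1) F s =
  \big[op/idx]_(0 <= j < k) \big[op/idx]_(1 <= s < m.+1) F (s + j * m)%N.
Proof.
elim: k => [|k IH]; first by rewrite mul0n !big_geq.
rewrite [RHS]big_nat_recr //= (@big_cat_nat _ _ _ (k * m).+1) //=;
  last by rewrite ltnS leq_mul2r leqnSn orbT.
rewrite IH; congr (op _ _); rewrite -add1n big_addn; apply: congr_big_nat => //; lia.
Qed.

Lemma sumn_map_comp (L : seq (seq nat)) (f : seq nat -> nat) :
  sumn (map f L) = (\sum_(1 <= s < (size L).+1) f (comp L s))%N.
Proof. by rewrite sumnE big_map (big_nth [::]) big_add1. Qed.

Section SqrtLam.
Variables (p d : nat) (lam : seq (seq nat)).
Hypotheses (p_gt0 : (0 < p)%N) (d_gt0 : (0 < d)%N) (size_lam : size lam = (p * d)%N).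
Local Notation o := (olam p d lam).
Local Notation pl := (plam p d lam).
Local Notation sq := (sqrtlam p d lam).

Lemma plamE : p = (pl * o)%N.
Proof. by rewrite divnK // olam_dvd. Qed.

Lemma plam_gt0 : (0 < pl)%N.
Proof. by rewrite divn_gt0 // olam_le. Qed.

Lemma sum_period_blocks (F : nat -> nat) :
  (\sum_(1 <= i < p.+1) F i = \sum_(0 <= k < pl) \sum_(1 <= i < o.+1) F (i + k * o))%N.
Proof. by rewrite [in p.+1]plamE big_nat_blocks. Qed.

Lemma pd_plamE : (p * d = pl * (d * o))%N.
Proof. by rewrite {1}plamE mulnAC mulnA. Qed.

Lemma comp_block t e : (0 < t <= p)%N -> (e < d)%N ->
  comp lam (d * t.-1 + e).+1 = nth [::] (block p d lam t) e.
Proof.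
case/andP=> t_gt0 t_le e_lt.
by rewrite /comp /block /= nth_take // nth_drop modn_small // prednK.
Qed.

Lemma comp_add_olam s : (0 < s)%N -> (s + d * o <= p * d)%N ->
  comp lam (s + d * o) = comp lam s.
Proof.
move=> s_gt0 s_le; have s_eq := divn_eq s.-1 d.
set a := s.-1 %/ d in s_eq *; set e := s.-1 %% d in s_eq.
have e_lt : (e < d)%N by rewrite ltn_mod.
have a_lt : (a + o < p)%N by rewrite /a addnC -divnMDl // ltn_divLR //; lia.
have -> : s = (d * a.+1.-1 + e).+1 by rewrite /= mulnC -s_eq prednK.
have -> : ((d * a.+1.-1 + e).+1 + d * o = (d * (o + a.+1).-1 + e).+1)%N by rewrite addnS /=; lia.
rewrite !comp_block -?addnS ?block_periodP ?olam_period //; lia.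
Qed.

Lemma comp_periodic s k : (0 < s <= d * o)%N -> (k < pl)%N ->
  comp lam (s + k * (d * o)) = comp lam s.
Proof.
case/andP=> s_gt0 s_le; elim: k => [|k IH] k_lt; first by rewrite addn0.
have k_le := leq_mul k_lt (leqnn (d * o)).
rewrite mulSnr addnA comp_add_olam ?IH ?(ltnW k_lt) ?addn_gt0 ?s_gt0 // pd_plamE; lia.
Qed.

Lemma size_sqrtlam : size sq = (d * o)%N.
Proof.
rewrite size_take size_lam pd_plamE; case: ltnP => // le_pl.
by apply/eqP; rewrite eqn_leq le_pl leq_pmull ?plam_gt0.
Qed.

Lemma comp_sqrtlam s : (s <= d * o)%N -> comp sq s = comp lam s.
Proof. by case: s => [|s] s_le; rewrite /comp nth_take // muln_gt0 d_gt0. Qed.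

Lemma sum_map_lam (f : seq nat -> nat) : sumn (map f lam) = (pl * sumn (map f sq))%N.
Proof.
rewrite !sumn_map_comp size_lam size_sqrtlam pd_plamE big_nat_blocks.
transitivity (\sum_(0 <= k < pl) \sum_(1 <= s < (d * o).+1) f (comp sq s))%N;
  last by rewrite sum_nat_const_nat subn0.
apply: eq_big_nat => k /andP[_ k_lt]; apply: eq_big_nat => s /andP[s_gt0].
by rewrite ltnS => s_le; rewrite comp_sqrtlam // comp_periodic // s_gt0.
Qed.

Lemma beta_arrow_lam : beta (arrow lam) = (pl * pl * beta (arrow sq) + 'C(pl, 2) * msize sq)%N.
Proof.
by rewrite /arrow (@beta_sort_rep pl _ (flatten sq)) ?sumn_flatten // => P;
  rewrite !count_flatten sum_map_lam.
Qed.

End SqrtLam.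

Lemma msize_take (L : seq (seq nat)) d j :
  msize (take (d * j) L) = (\sum_(1 <= t < j.+1) msize (take d (drop (d * t.-1) L)))%N.
Proof.
elim: j => [|j IH]; first by rewrite muln0 take0 big_geq.
by rewrite big_nat_recr //= mulnS addnC takeD /msize map_cat sumn_cat -IH.
Qed.

Lemma bin2_pairs (f : nat -> nat) m :
  (\sum_(1 <= i < m.+1) \sum_(i.+1 <= j < m.+1) f i * f j
   + \sum_(1 <= i < m.+1) 'C(f i, 2) = 'C(\sum_(1 <= i < m.+1) f i, 2))%N.
Proof.
elim: m => [|m IH]; first by rewrite !big_geq.
rewrite [in RHS](big_nat_recr m.+1) // [\sum_(1 <= i < m.+2) 'C(f i, 2)](big_nat_recr m.+1) //.
rewrite [\sum_(1 <= i < m.+2) _](big_nat_recr m.+1) //= [\sum_(m.+2 <= j < m.+2) _]big_geq // addn0.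
rewrite (eq_big_nat _ _ (F2 := fun i => \sum_(i.+1 <= j < m.+1) f i * f j + f i * f m.+1)%N);
  last by move=> i /andP[_ i_le]; rewrite big_nat_recr.
rewrite big_split /= -big_distrl /=.
have := bin2_double (\sum_(1 <= i < m.+1) f i); have := bin2_double (f m.+1).
have := bin2_double (\sum_(1 <= i < m.+1) f i + f m.+1); lia.
Qed.

Lemma bin2_mul k m : 'C(k * m, 2) = (k * k * 'C(m, 2) + 'C(k, 2) * m)%N.
Proof. have := bin2_double k; have := bin2_double m; have := bin2_double (k * m); nia. Qed.

Local Open Scope ring_scope.

Lemma natr_bin2 (F : fieldType) k : 2%:R != 0 :> F ->
  'C(k, 2)%:R = (k%:R * k%:R - k%:R) / 2%:R :> F.
Proof.
move=> two_neq0; apply: (mulIf two_neq0); rewrite divfK // -natrM -natrM -(bin2_double k).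
by rewrite natrD addrK.
Qed.

Lemma sumn_bpart b : sumn b = (\sum_(1 <= i < (size b).+1) bpart b i)%N.
Proof. by rewrite sumnE (big_nth 0) big_add1. Qed.

Section Composition.
Context {p d n : nat} {b : seq nat} {lam : seq (seq nat)}.
Hypotheses (p_gt0 : (0 < p)%N) (d_gt0 : (0 < d)%N).
Hypotheses (b_comp : is_comp p n b) (lam_in : in_Pdb p d b lam).
Local Notation o := (olam p d lam).
Local Notation pl := (plam p d lam).
Local Notation sq := (sqrtlam p d lam).

Lemma size_lam : size lam = (p * d)%N.
Proof. by case/and3P: lam_in => /eqP. Qed.

Lemma bpart_block t : (0 < t <= p)%N -> bpart b t = msize (block p d lam t).
Proof.
case/andP=> t_gt0 t_le; case/and3P: lam_in => _ _ /allP/(_ t) size_block.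
by apply/esym/eqP/size_block; rewrite mem_iota t_gt0 add1n ltnS.
Qed.

Lemma bpart_periodic i k : (0 < i <= o)%N -> (k < pl)%N -> bpart b (i + k * o) = bpart b i.
Proof.
case/andP=> i_gt0 i_le k_lt; have o_le := olam_le p d lam p_gt0.
have ik_le : (i + k * o <= p)%N.
  by have := plamE p d lam p_gt0; have := leq_mul k_lt (leqnn o); lia.
rewrite !bpart_block; first by rewrite addnC block_mul_olam.
  by rewrite i_gt0 (leq_trans i_le o_le).
by rewrite addn_gt0 i_gt0 ik_le.
Qed.

Lemma sum_bpart_blocks (G : nat -> nat -> nat) :
  (\sum_(1 <= i < p.+1) G i (bpart b i)
   = \sum_(0 <= k < pl) \sum_(1 <= i < o.+1) G (i + k * o) (bpart b i))%N.
Proof.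
rewrite (sum_period_blocks p d lam p_gt0).
apply: eq_big_nat => k /andP[_ k_lt]; apply: eq_big_nat => i /andP[i_gt0].
by rewrite ltnS => i_le; rewrite bpart_periodic ?i_gt0.
Qed.

Lemma msize_sqrtlam : msize sq = (\sum_(1 <= i < o.+1) bpart b i)%N.
Proof.
rewrite msize_take; apply: eq_big_nat => t /andP[t_gt0]; rewrite ltnS => t_le.
have t_le_p := leq_trans t_le (olam_le _ _ _ p_gt0).
by rewrite bpart_block ?t_gt0 // /block modn_small // prednK.
Qed.

Lemma n_eq : n = (pl * msize sq)%N.
Proof.
case/andP: b_comp => /eqP size_b /eqP <-.
rewrite sumn_bpart size_b (sum_bpart_blocks (fun _ x => x)) msize_sqrtlam.
by rewrite sum_nat_const_nat subn0.
Qed.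

Lemma nlamE : nlam p d n lam = msize sq.
Proof. by rewrite /nlam n_eq mulKn // plam_gt0. Qed.

Lemma alphab_blocks : alphab p b =
  (pl * \sum_(1 <= i < o.+1) i * bpart b i + o * msize sq * 'C(pl, 2))%N.
Proof.
rewrite /alphab (sum_bpart_blocks (fun i x => i * x)%N) msize_sqrtlam.
transitivity (\sum_(0 <= k < pl)
  (\sum_(1 <= i < o.+1) i * bpart b i + k * (o * \sum_(1 <= i < o.+1) bpart b i)))%N.
  apply: eq_bigr => k _; rewrite ![in RHS]big_distrr -big_split.
  by apply: eq_bigr => i _ /=; rewrite mulnDl mulnA.
rewrite big_split /= sum_nat_const_nat subn0 -big_distrl /= bin2_sum; lia.
Qed.

Lemma ellw_blocks : (ellw p b + pl * \sum_(1 <= i < o.+1) 'C(bpart b i, 2) = 'C(n, 2))%N.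
Proof.
case/andP: b_comp => /eqP size_b /eqP <-.
rewrite sumn_bpart size_b -bin2_pairs (sum_bpart_blocks (fun _ x => 'C(x, 2))).
by rewrite sum_nat_const_nat subn0.
Qed.

Lemma sumbeta_blocks :
  sumbeta p d lam = (pl * \sum_(1 <= a < o.+1) beta (arrow (block p d lam a)))%N.
Proof.
rewrite /sumbeta (sum_period_blocks p d lam p_gt0) -[X in (X * _)%N]subn0 -sum_nat_const_nat.
apply: eq_big_nat => k _; apply: eq_big_nat => a /andP[a_gt0 _].
by rewrite addnC block_mul_olam.
Qed.

Local Notation nl := (msize sq).
Local Notation alphab_o := (\sum_(1 <= i < o.+1) i * bpart b i)%N.
Local Notation bin2_o := (\sum_(1 <= i < o.+1) 'C(bpart b i, 2))%N.
Local Notation sumbeta_o := (\sum_(1 <= a < o.+1) beta (arrow (block p d lam a)))%N.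

Let pl_neq0 : pl%:R != 0 :> rat.
Proof. by rewrite pnatr_eq0 -lt0n plam_gt0. Qed.

Lemma gammabE : gammab p d b lam =
  ((pl * 'C(nl, 2) + sumbeta_o)%:Z - (bin2_o + pl * beta (arrow sq))%:Z)%:~R.
Proof.
have ellwE : (ellw p b)%:R = 'C(n, 2)%:R - (pl * bin2_o)%:R :> rat.
  by rewrite -ellw_blocks natrD addrK.
rewrite /gammab ellwE sumbeta_blocks (beta_arrow_lam p d lam p_gt0 d_gt0 size_lam).
rewrite n_eq bin2_mul.
by field.
Qed.

Lemma alphalamE : alphalam p d n b lam = ((d * nl * 'C(p, 2))%:Z - (d * alphab_o)%:Z)%:~R.
Proof.
have two_neq0 : 2%:R != 0 :> rat by rewrite pnatr_eq0.
have pE : p%:R = pl%:R * o%:R :> rat by rewrite -natrM -plamE.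
rewrite /alphalam nlamE alphab_blocks intrB -!pmulrn !(natrD, natrM) !natr_bin2 // pE.
by field.
Qed.

Lemma q_exponent : (ellw p b)%:Z - (beta (arrow lam))%:Z + (sumbeta p d lam)%:Z
  = numq (gammab p d b lam) * pl%:Z.
Proof.
rewrite gammabE numq_int (beta_arrow_lam p d lam p_gt0 d_gt0 size_lam) sumbeta_blocks.
have := ellw_blocks; rewrite n_eq bin2_mul; lia.
Qed.

Lemma eps_exponent :
  ((p * d * n * (p - 1))./2)%:Z - (d * alphab p b)%:Z
  = (((d * o * n)%N%:Z * (1 - pl%:Z)) %/ 2)%Z + numq (alphalam p d n b lam) * pl%:Z.
Proof.
have halfE : ((p * d * n * (p - 1))./2 = d * n * 'C(p, 2))%N.
  have pp : (p * (p - 1) = 'C(p, 2) * 2)%N by have := bin2_double p; rewrite mulnBr muln1; lia.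
  by rewrite -[RHS]half_double -muln2 -[in RHS]mulnA -pp; congr _./2; ring.
have twiceE : (d * o * n)%:Z * (1 - pl%:Z) = - (d * o * nl * 'C(pl, 2))%:Z * 2.
  by have := bin2_double pl; rewrite n_eq; lia.
by rewrite halfE twiceE mulzK // alphalamE numq_int alphab_blocks n_eq; lia.
Qed.

End Composition.

Lemma expf_eq1_neq0 {F : fieldType} {x : F} {k : nat} : (0 < k)%N -> x ^+ k = 1 -> x != 0.
Proof. by move=> k_gt0; apply: contra_eq_neq => ->; rewrite expr0n gtn_eqF //= eq_sym oner_eq0. Qed.

Definition submod m k j := if (j <= k)%N then (k - j)%N else (k + m - j)%N.

Section Submod.
Variables (m k : nat).
Hypothesis k_lt : (k < m)%N.

Lemma submod_lt j : (j < m)%N -> (submod m k j < m)%N.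
Proof. by rewrite /submod; case: (leqP j k); lia. Qed.

Lemma submod_inj j j' : (j < m)%N -> (j' < m)%N -> submod m k j = submod m k j' -> j = j'.
Proof. by rewrite /submod; case: (leqP j k); case: (leqP j' k); lia. Qed.

Lemma submod_eq0 j : (j < m)%N -> (submod m k j == 0)%N = (j == k).
Proof. by rewrite /submod; case: (leqP j k) => ? ?; apply/eqP/eqP; lia. Qed.

Lemma big_submod (R : Type) (idx : R) (op : Monoid.com_law idx) (P : pred nat) (F : nat -> R) :
  \big[op/idx]_(0 <= j < m | P (submod m k j)) F (submod m k j)
  = \big[op/idx]_(0 <= a < m | P a) F a.
Proof.
rewrite -big_map; apply: perm_big; rewrite /index_iota subn0.
have uniq_im : uniq (map (submod m k) (iota 0 m)).
  rewrite map_inj_in_uniq ?iota_uniq // => j j'; rewrite !mem_iota add0n.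
  by move=> /andP[_ j_lt] /andP[_ j'_lt]; apply: submod_inj.
have sub_im : {subset map (submod m k) (iota 0 m) <= iota 0 m}.
  move=> x /mapP[j]; rewrite !mem_iota add0n => /andP[_ j_lt] ->.
  by rewrite leq0n submod_lt.
have [_ eq_im] := uniq_min_size uniq_im sub_im (eq_leq (esym (size_map _ _))).
by apply: uniq_perm; rewrite ?iota_uniq.
Qed.

End Submod.

Lemma addn_mul_eq o u v j k : (0 < u <= o)%N -> (0 < v <= o)%N ->
  (v + j * o == u + k * o)%N = (v == u) && (j == k).
Proof.
move=> /andP[u_gt0 u_le] /andP[v_gt0 v_le]; apply/eqP/andP => [e|[/eqP-> /eqP->]] //.
have e' : (j * o + (v - 1) = k * o + (u - 1))%N by lia.
have o_gt0 : (0 < o)%N by lia.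
have := congr1 (divn^~ o) e'; have := congr1 (modn^~ o) e'.
rewrite /= !modnMDl !divnMDl // !modn_small ?divn_small; lia.
Qed.

Lemma prod_root_shift (F : fieldType) (eps x : F) (m o u v k : nat) :
  eps ^+ (m * o) = 1 -> eps != 0 -> (k < m)%N -> (0 < u <= o)%N -> (0 < v <= o)%N ->
  \prod_(0 <= j < m | (v + j * o != u + k * o)%N)
     (eps ^ ((u + k * o)%N%:Z - (v + j * o)%N%:Z) * x - 1)
  = \prod_(0 <= a < m | (v == u) ==> (a != 0)%N) (eps ^+ (a * o) * (eps ^ (u%:Z - v%:Z) * x) - 1).
Proof.
move=> eps_mo eps_neq0 k_lt u_bd v_bd.
rewrite -[RHS](big_submod _ _ k_lt) big_nat_cond [RHS]big_nat_cond.
apply: eq_big => [j | j /andP[/andP[_ j_lt] _]].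
  by apply/andb_id2l => /andP[_ j_lt]; rewrite addn_mul_eq // submod_eq0 // negb_and implybE.
rewrite mulrA; congr (_ * x - 1); rewrite exprnP -expfzDr //.
rewrite /submod; case: (leqP j k) => [j_le|k_lt_j] /=.
  by have := leq_mul j_le (leqnn o); rewrite mulnBl => jo_le; congr (eps ^ _); lia.
have jo_le := leq_mul (ltnW j_lt) (leqnn o).
rewrite (_ : ((k + m - j) * o)%N%:Z + _ = (u + k * o)%N%:Z - (v + j * o)%N%:Z + (m * o)%N%:Z);
  last by rewrite mulnBl mulnDl; lia.
by rewrite [in RHS]expfzDr // -exprnP eps_mo mulr1.
Qed.

Section CellProduct.
Context {K : fieldType} {p d : nat} {eps q : K} {Q : nat -> K} {lam : seq (seq nat)}.
Hypotheses (p_gt0 : (0 < p)%N) (d_gt0 : (0 < d)%N) (size_lam : size lam = (p * d)%N).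
Hypothesis eps_p : eps ^+ p = 1.
Local Notation o := (olam p d lam).
Local Notation pl := (plam p d lam).
Local Notation sq := (sqrtlam p d lam).
Local Notation hl := (hl d eps q Q lam).

Let hlq i j s t := q ^ hook (comp lam s) (comp lam t) i j * Q (ds d s) * (Q (ds d t))^-1.

Let hlE i j s t : hl i j s t = eps ^ ((ps d s)%:Z - (ps d t)%:Z) * hlq i j s t.
Proof. by rewrite /hl /hlq !mulrA. Qed.

Lemma hl_shift i j s t k k' : (0 < s <= d * o)%N -> (0 < t <= d * o)%N ->
  (k < pl)%N -> (k' < pl)%N ->
  hl i j (s + k * (d * o)) (t + k' * (d * o))
  = eps ^ ((ps d s + k * o)%N%:Z - (ps d t + k' * o)%N%:Z) * hlq i j s t.
Proof.
move=> s_bd t_bd k_lt k'_lt; have /andP[s_gt0 _] := s_bd; have /andP[t_gt0 _] := t_bd.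
by rewrite hlE /hlq !ps_shift // !ds_shift // !comp_periodic.
Qed.

Lemma prod_hl_shift i j s k : (0 < s <= d * o)%N -> (k < pl)%N ->
  \prod_(1 <= t < (p * d).+1 | ps d t != ps d (s + k * (d * o))) (hl i j (s + k * (d * o)) t - 1)
  = \prod_(1 <= t < (d * o).+1)
      \prod_(0 <= a < pl | (ps d t == ps d s) ==> (a != 0)%N) (eps ^+ (a * o) * hl i j s t - 1).
Proof.
move=> s_bd k_lt; have /andP[s_gt0 _] := s_bd.
rewrite (pd_plamE p d lam p_gt0) big_mkcond big_nat_blocks exchange_big_nat.
apply: eq_big_nat => t /andP[t_gt0]; rewrite ltnS => t_le.
have t_bd : (0 < t <= d * o)%N by rewrite t_gt0.
transitivity (\prod_(0 <= k' < pl | (ps d t + k' * o != ps d s + k * o)%N)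
  (eps ^ ((ps d s + k * o)%N%:Z - (ps d t + k' * o)%N%:Z) * hlq i j s t - 1)).
  by rewrite [RHS]big_mkcond; apply: eq_big_nat => k' /andP[_ k'_lt]; rewrite !ps_shift // hl_shift.
have eps_neq0 := expf_eq1_neq0 p_gt0 eps_p.
rewrite prod_root_shift ?ps_bound // -?plamE //.
by apply: eq_bigr => a _; rewrite hlE.
Qed.

Lemma cellprod_flam :
  cellprod lam (fun i j s =>
    \prod_(1 <= t < (p * d).+1 | ps d t != ps d s) (hl i j s t - 1))
  = cellprod sq (fun i j s =>
      \prod_(1 <= t < (d * o).+1)
        \prod_(0 <= a < pl | (ps d t == ps d s) ==> (a != 0)%N) (eps ^+ (a * o) * hl i j s t - 1))
    ^+ pl.
Proof.
rewrite /cellprod size_lam size_sqrtlam // {1}(pd_plamE p d lam p_gt0) big_nat_blocks.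
rewrite -(subn0 pl) -prodr_const_nat subn0.
apply: eq_big_nat => k /andP[_ k_lt]; apply: eq_big_nat => s /andP[s_gt0]; rewrite ltnS => s_le.
rewrite comp_sqrtlam // comp_periodic ?s_gt0 //.
by apply: eq_bigr => i _; apply: eq_bigr => j _; rewrite prod_hl_shift ?s_gt0.
Qed.

End CellProduct.

Section Laurent.
Variables (K : fieldType) (d : nat) (eps q : K) (Q : nat -> K).
Local Notation L := (inLaurent d eps q Q).

Lemma inLaurent_prod (I : Type) (r : seq I) (P : pred I) (F : I -> K) :
  (forall i, P i -> L (F i)) -> L (\prod_(i <- r | P i) F i).
Proof. by move=> LF; apply: big_ind => //; [exact: inL_one | exact: inL_mul]. Qed.

Lemma inLaurent_expn x k : L x -> L (x ^+ k).
Proof.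
by move=> Lx; elim: k => [|k IH]; [rewrite expr0; exact: inL_one | rewrite exprS; exact: inL_mul].
Qed.

Lemma inLaurent_expz x (z : int) : L x -> L x^-1 -> L (x ^ z).
Proof.
move=> Lx Lxinv; case: z => k; first exact: inLaurent_expn.
by rewrite NegzE -exprz_inv -exprnP; apply: inLaurent_expn.
Qed.

Lemma inLaurent_sub1 x : L x -> L (x - 1).
Proof. by move=> Lx; apply: inL_add => //; apply/inL_opp/inL_one. Qed.

Lemma inLaurent_Qprod : L (Qprod d Q).
Proof.
rewrite /Qprod big_nat_cond; apply: inLaurent_prod => i /andP[/andP[i_ge1 i_lt] _].
by apply: inL_Q; rewrite i_ge1 -ltnS.
Qed.

Variable p : nat.
Hypotheses (p_gt0 : (0 < p)%N) (eps_p : eps ^+ p = 1).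

Lemma inLaurent_eps_inv : L eps^-1.
Proof.
have eps_neq0 := expf_eq1_neq0 p_gt0 eps_p.
have -> : eps^-1 = eps ^+ p.-1 by apply: (mulIf eps_neq0); rewrite mulVf // -exprSr prednK.
exact/inLaurent_expn/inL_eps.
Qed.

Hypothesis d_gt0 : (0 < d)%N.

Lemma inLaurent_hl lam i j s t : L (hl d eps q Q lam i j s t).
Proof.
have ds_bd : (1 <= ds d s <= d)%N /\ (1 <= ds d t <= d)%N by rewrite /ds !ltn_mod.
rewrite /hl; repeat apply: inL_mul.
- exact/inLaurent_expz/inLaurent_eps_inv/inL_eps.
- exact/inLaurent_expz/inL_qinv/inL_q.
- by apply: inL_Q; case: ds_bd.
- by apply: inL_Qinv; case: ds_bd.
Qed.

Lemma glam_inLaurent n b lam : L (glam p d n eps q Q b lam).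
Proof.
rewrite /glam /cellprod; repeat apply: inL_mul.
- exact/inLaurent_expz/inLaurent_eps_inv/inL_eps.
- exact/inLaurent_expz/inL_qinv/inL_q.
- exact/inLaurent_expn/inLaurent_Qprod.
do 5 apply: inLaurent_prod => ? _.
exact/inLaurent_sub1/inL_mul/inLaurent_hl/inLaurent_expn/inL_eps.
Qed.

End Laurent.

Theorem theorem3p12 (K : fieldType) (p d n : nat) (eps q : K) (Q : nat -> K)
    (b : seq nat) (lam : seq (seq nat)) :
  (1 < p)%N -> (1 <= d)%N -> (3 <= n)%N ->
  [pchar K] =i pred0 ->
  p.-primitive_root eps -> q != 0 -> (forall i, (1 <= i <= d)%N -> Q i != 0) ->
  is_comp p n b -> in_Pdb p d b lam ->
  [/\ gammab p d b lam \is a Num.int,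
      alphalam p d n b lam \is a Num.int,
      inLaurent d eps q Q (glam p d n eps q Q b lam) &
      flam p d n eps q Q b lam =
        eps ^ ((((d * olam p d lam * n)%N)%:Z * (1 - (plam p d lam)%:Z)) %/ 2)%Z
        * glam p d n eps q Q b lam ^+ plam p d lam].
Proof.
(* only [eps ^+ p = 1] is needed from the nondegeneracy assumptions *)
move=> p_gt1 d_gt0 _ _ eps_prim _ _ b_comp lam_in; have p_gt0 := ltnW p_gt1.
have eps_p : eps ^+ p = 1 := prim_expr_order eps_prim.
split.
- by rewrite (gammabE p_gt0 d_gt0 b_comp lam_in) intr_int.
- by rewrite (alphalamE p_gt0 d_gt0 b_comp lam_in) intr_int.
- exact: glam_inLaurent.
have size_lam := size_lam lam_in.
have Q_exp : (n * (p - 1) = nlam p d n lam * (p - 1) * plam p d lam)%N.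
  by rewrite (nlamE p_gt0 d_gt0 b_comp lam_in) (n_eq p_gt0 d_gt0 b_comp lam_in); ring.
rewrite /flam /glam; cbv zeta.
rewrite (cellprod_flam p_gt0 d_gt0 size_lam eps_p).
rewrite (eps_exponent p_gt0 d_gt0 b_comp lam_in) (q_exponent p_gt0 d_gt0 b_comp lam_in).
by rewrite expfzDr ?(expf_eq1_neq0 p_gt0) // -!exprz_exp -!exprnP Q_exp exprM !exprMn !mulrA.
Qed.
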